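(* Let $\Gamma$ be a finite simplicial graph. If $(a,c)$ is a non-adjacent domination pair in $\Gamma$, $c$ is not isolated, and no vertex adjacent to $c$ dominates $c$, then there is a domination diamond $(a,b,c,d)$ in $\Gamma$.
   Context: For distinct vertices $x,y$, $x$ dominates $y$ ($x>y$) if every vertex adjacent to $y$ is adjacent to or equal to $x$; $(x,y)$ is a non-adjacent domination pair if moreover $x$ and $y$ are not adjacent. A vertex is isolated if it has no neighbours. A domination diamond is a quadruple $(a,b,c,d)$ of distinct vertices with $a\sim b\sim c\sim d\sim a$, $a\not\sim c$, $b\not\sim d$, and $a>c$ ($\sim$ denotes adjacency). *)

From mathcomp Require Import all_boot.
Set Implicit Arguments. Unset Strict Implicit. Unset Printing Implicit Defensive.

Definition simple_graph (T : finType) (e : rel T) : Prop :=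
  symmetric e /\ irreflexive e.

Definition dominates (T : finType) (e : rel T) (x y : T) : Prop :=
  x != y /\ forall z, e y z -> e x z \/ z = x.

Definition nonadj_domination_pair (T : finType) (e : rel T) (x y : T) : Prop :=
  dominates e x y /\ ~~ e x y.

Definition isolated (T : finType) (e : rel T) (v : T) : Prop :=
  forall w, ~~ e v w.

Definition domination_diamond (T : finType) (e : rel T) (a b c d : T) : Prop :=
  uniq [:: a; b; c; d] /\
  e a b /\ e b c /\ e c d /\ e d a /\ ~~ e a c /\ ~~ e b d /\
  dominates e a c.

From mathcomp Require Import all_boot.

(* Take a neighbour b of c. Since a dominates c and a, c are not adjacent,
   every neighbour of c is a neighbour of a. As b does not dominate c, some
   neighbour d of c other than b is not adjacent to b; then a, b, c, d form
   the diamond. *)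

Section Domination.

Context {T : finType} {e : rel T}.
Hypotheses (e_sym : symmetric e) (e_irr : irreflexive e).

Lemma adj_neq {x y : T} : e x y -> x != y.
Proof. by apply: contraTneq => ->; rewrite e_irr. Qed.

Lemma not_isolated_neighbour {v : T} : ~ isolated e v -> exists w, e v w.
Proof.
move=> niso; have [/existsP [w evw]|] := boolP [exists w, e v w].
  by exists w.
by rewrite negb_exists => /forallP nadj; case: niso.
Qed.

Lemma nonadj_domination_adj {x y z : T} :
  nonadj_domination_pair e x y -> e y z -> e x z.
Proof.
move=> [[_ dom] nexy] eyz; have [//|zx] := dom z eyz.
by move: nexy; rewrite -zx e_sym eyz.
Qed.

Lemma not_dominates_witness {x y : T} :
  x != y -> ~ dominates e x y -> exists2 z, e y z & ~~ e x z && (z != x).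
Proof.
move=> nxy ndom.
have [/existsP [z /andP [eyz nz]]|] :=
  boolP [exists z, e y z && (~~ e x z && (z != x))].
  by exists z.
rewrite negb_exists => /forallP nz; case: ndom; split => // z eyz.
move: (nz z); rewrite eyz /= negb_and !negbK.
by case/orP => [exz|/eqP ->]; [left | right].
Qed.

End Domination.

Theorem lemma2p11 (T : finType) (e : rel T) (a c : T) :
  simple_graph e ->
  nonadj_domination_pair e a c ->
  ~ isolated e c ->
  (forall v, e v c -> ~ dominates e v c) ->
  exists b d, domination_diamond e a b c d.
Proof.
move=> [e_sym e_irr] pair niso ndom.
have [b ecb] := not_isolated_neighbour niso.
have ebc : e b c by rewrite e_sym.
have [d ecd /andP [nebd ndb]] := not_dominates_witness (adj_neq e_irr ebc) (ndom b ebc).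
have eab := nonadj_domination_adj e_sym pair ecb.
have ead := nonadj_domination_adj e_sym pair ecd.
have [dom_ac neac] := pair; have [nac _] := dom_ac.
exists b, d; split.
  rewrite /= !inE !negb_or (adj_neq e_irr eab) nac (adj_neq e_irr ead).
  by rewrite (adj_neq e_irr ebc) (adj_neq e_irr ecd) eq_sym ndb.
by rewrite eab ebc ecd (e_sym d a) ead neac nebd.
Qed.
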